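(* Fix $L>0$. Let $\mathcal{P}_+=\bigsqcup_{N\ge1}\mathcal{P}_{+,N}$, where $\mathcal{P}_{+,N}$ is the set of $x=(x_1,\dots,x_{2N})\in(\mathbb{R}_{>0})^{2N}$ with $\sum_{i=1}^{2N}x_i\le L$ satisfying the highest weight condition. Let $\mathcal{R}$ be the set of all data $\big(s;(\mu^{(i)},\nu^{(i)})_{1\le i\le s};(J^{(i)})_{1\le i\le s}\big)$ where $s\ge1$ is an integer, $\mu^{(i)}>0$ are reals, $\nu^{(i)}\ge1$ are integers such that, with $N^{(i)}=\sum_{j=i}^{s}\nu^{(j)}$, one has $\sum_{i=1}^s N^{(i)}\mu^{(i)}\le L/2$, and each $J^{(i)}=(J^{(i)}_1,\dots,J^{(i)}_{\nu^{(i)}})$ is a real tuple with $0\le J^{(i)}_1\le\cdots\le J^{(i)}_{\nu^{(i)}}\le q_i$, where $\lambda^{(i)}=\sum_{l=1}^i\mu^{(l)}$ and $q_i=L-2\sum_{k=1}^{s}\min(\lambda^{(i)},\lambda^{(k)})\nu^{(k)}$. Define $\phi:\mathcal{P}_+\to\mathcal{R}$ by running Algorithm II on $x$ and setting $s=u$, taking the pairs $(\mu^{(i)},\nu^{(i)})$ it produces, and taking $J^{(i)}$ to be the tuple $$\underbrace{r^{(i)}_1,\dots,r^{(i)}_1}_{\lceil n^{(i)}_1/2\rceil},\ \underbrace{r^{(i)}_2,\dots,r^{(i)}_2}_{\lceil n^{(i)}_2/2\rceil},\ \dots,\ \underbrace{r^{(i)}_{k^{(i)}},\dots,r^{(i)}_{k^{(i)}}}_{\lceil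 n^{(i)}_{k^{(i)}}/2\rceil}.$$ Then $\phi$ is well defined (takes values in $\mathcal{R}$) and is a bijection $\mathcal{P}_+\to\mathcal{R}$.
   Context: Highest weight condition: a sequence $x_1,\dots,x_{2n}$ of nonnegative reals satisfies it if $\sum_{i=1}^k(x_{2i-1}-x_{2i})\ge0$ for all $1\le k\le n$. Algorithm II. Set $N^{(1)}=N$, $x^{(1)}=x$. Given $x^{(i)}=(x^{(i)}_1,\dots,x^{(i)}_{2N^{(i)}})$ of positive reals satisfying the highest weight condition: let $\mu^{(i)}=\min_j x^{(i)}_j$ and $y^{(i)}_j=x^{(i)}_j-\mu^{(i)}$. In the (linear, non-cyclic) array $y^{(i)}_1,\dots,y^{(i)}_{2N^{(i)}}$ consider the maximal runs of consecutive zeros (a lone zero counts as a run); say there are $k^{(i)}$ runs, numbered $1,\dots,k^{(i)}$ from left to right, with lengths $n^{(i)}_1,\dots,n^{(i)}_{k^{(i)}}$. Let $I^{(i)}_j$ be the position of the first entry of the $j$th run and $r^{(i)}_j=\sum_{l=1}^{I^{(i)}_j-1}y^{(i)}_l$. Let $N^{(i+1)}=N^{(i)}-\sum_{j}\lceil n^{(i)}_j/2\rceil$ and $\nu^{(i)}=N^{(i)}-N^{(i+1)}$. If $N^{(i+1)}=0$, stop and set $u=i$. Otherwise form $x^{(i+1)}$ from $y^{(i)}$: (a) if a run of zeros is at the left end, delete it; (b) for every run of zeros lying between positive entries $a,b$, delete the zeros if the run length is even, and if odd delete the zeros and also replace $a,b$ by the single entry $a+b$; (c') if a run of zeros is at the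 right end, preceded by a positive entry $a$, delete the zeros, and if its length is odd also delete $a$. Repeat with $x^{(i+1)}$. *)

(* The reals are modelled by an arbitrary real field
   [R : realFieldType] (the algorithm and the statement only use the ordered
   field structure of the reals). *)
From HB Require Import structures.
From mathcomp Require Import all_boot all_order all_algebra.
Set Implicit Arguments. Unset Strict Implicit. Unset Printing Implicit Defensive.
Import Order.TTheory GRing.Theory Num.Theory.
Local Open Scope ring_scope.

Section Defs.
Variable R : realFieldType.

(* ---------- highest weight condition (0-based indices) ----------
   sum_{i=1}^k (x_{2i-1} - x_{2i}) >= 0 for 1 <= k <= n, where size x = 2n. *)
Definition hw (x : seq R) : bool :=
  all (fun k => 0 <= \sum_(i < k) (x`_(i.*2) - x`_(i.*2.+1)))
      (iota 1 (size x)./2).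

Definition inP (L : R) (x : seq R) : bool :=
  [&& ~~ odd (size x), (0 < size x)%N,
      all (fun a => 0 < a) x,
      \sum_(a <- x) a <= L & hw x].

Definition minseq (x : seq R) : R := foldr Num.min (head 0 x) x.

(* 0-based start positions of the maximal runs of zeros of y *)
Definition run_starts (y : seq R) : seq nat :=
  [seq i <- iota 0 (size y) | (y`_i == 0) && ((i == 0%N) || (y`_(i.-1) != 0))].
Definition run_len (y : seq R) (i : nat) : nat := find (fun a => a != 0) (drop i y).
Definition run_r (y : seq R) (i : nat) : R := \sum_(l < i) y`_l.

Definition nu_of (y : seq R) : nat := \sum_(i <- run_starts y) uphalf (run_len y i).
Definition J_of (y : seq R) : seq R :=
  flatten [seq nseq (uphalf (run_len y i)) (run_r y i) | i <- run_starts y].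

(* Rules (b) and (c'), processed left to right: [cur] is the current
   (possibly already merged) positive entry, [m] the number of zeros seen
   since it. *)
Fixpoint next_aux (cur : R) (m : nat) (s : seq R) : seq R :=
  match s with
  | [::] => if odd m then [::] else [:: cur]
  | a :: s' =>
      if a == 0 then next_aux cur m.+1 s'
      else if odd m then next_aux (cur + a) 0 s'
      else cur :: next_aux a 0 s'
  end.
(* Rule (a): delete a leading run of zeros, then apply (b), (c'). *)
Definition next_seq (y : seq R) : seq R :=
  match drop (find (fun a => a != 0) y) y with
  | [::] => [::]
  | a :: s => next_aux a 0 s
  end.

(* Output data: a list of triples (mu^(i), nu^(i), J^(i)), i = 1..s. *)
Definition data := seq (R * nat * seq R).

(* Returns None if the algorithm is not
   well defined along the way (current x not of length 2N^(i), not positive,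
   not highest weight, N^(i+1) < 0) or does not stop within the fuel. *)
Fixpoint algo (fuel : nat) (N : nat) (x : seq R) : option data :=
  match fuel with
  | 0 => None
  | fuel'.+1 =>
    if ~~ [&& size x == N.*2 :> nat, all (fun a => 0 < a) x & hw x] then None else
    let mu := minseq x in
    let y := [seq a - mu | a <- x] in
    let nu := nu_of y in
    if (N < nu)%N then None else
    let here := (mu, nu, J_of y) in
    if (N - nu)%N == 0%N then Some [:: here] else
    match algo fuel' (N - nu) (next_seq y) with
    | Some d => Some (here :: d)
    | None => None
    end
  end.

Definition phi (x : seq R) : option data := algo (size x) (size x)./2 x.

Definition mus (d : data) : seq R := [seq p.1.1 | p <- d].
Definition nus (d : data) : seq nat := [seq p.1.2 | p <- d].
Definition Js (d : data) : seq (seq R) := [seq p.2 | p <- d].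

(* N^(i) = sum_{j >= i} nu^(j)   (0-based i) *)
Definition Nsup (d : data) (i : nat) : nat := (\sum_(i <= j < size d) nth 0 (nus d) j)%N.
Definition lam (d : data) (i : nat) : R := \sum_(l < i.+1) (mus d)`_l.
Definition qbd (L : R) (d : data) (i : nat) : R :=
  L - 2 * \sum_(k < size d) Num.min (lam d i) (lam d k) * (nth 0%N (nus d) k)%:R.

Definition inRdata (L : R) (d : data) : Prop :=
  [/\ (0 < size d)%N,
      forall i, (i < size d)%N -> 0 < (mus d)`_i,
      forall i, (i < size d)%N -> (0 < nth 0 (nus d) i)%N,
      \sum_(i < size d) (Nsup d i)%:R * (mus d)`_i <= L / 2 &
      forall i, (i < size d)%N ->
        let J := nth [::] (Js d) i in
        [/\ size J = nth 0%N (nus d) i, sorted <=%R J & all (fun t => 0 <= t <= qbd L d i) J]].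

End Defs.

(* One step of Algorithm II sends a positive highest weight sequence x to
   (mu, |J|, J) and a shorter positive sequence x', where mu is the minimum
   of x and J records the runs of zeros of y = x - mu.  The proof constructs
   the inverse step explicitly: [unstep s J x'] reinserts into x' the runs of
   zeros described by a nondecreasing tuple J, and [step_inv mu J x'] adds mu
   back.  We show
   - that Algorithm II applied to [step_inv mu J x'] performs exactly one
     step returning (mu, |J|, J) and x' ([J_of_unstep], [next_seq_unstep],
     [algo_step]);
   - that every input is of this form ([unstep_surj], [step_decompose]),
     the highest weight condition forcing the leading run of zeros of y to
     be even ([hw_lead_zeros]);
   - that [step_inv] transports the constraints: positivity, the highest
     weight condition and the bound L on the sum for x correspond to the same
     constraints for x' with L replaced by L - 2 N mu, together with the bound
     0 <= J <= L - 2 N mu ([inPN_step]), which is also the recursive shape of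
     script-R ([inR_cons]).
   Iterating, [psi] (the composite of the inverse steps) maps script-R into
   P_+ with phi o psi = id ([psi_spec]), and phi maps P_+ into script-R with
   psi o phi = id ([phi_spec]); the theorem follows. *)

From HB Require Import structures.
From mathcomp Require Import all_boot all_order all_algebra.
From mathcomp Require Import ring lra zify.
Import Order.TTheory GRing.Theory Num.Theory.
Local Open Scope ring_scope.
Set Implicit Arguments. Unset Strict Implicit. Unset Printing Implicit Defensive.

Section AlgorithmII.
Variable R : realFieldType.
Implicit Types (s t v a c mu L : R) (x y z J : seq R) (d : data R).

(* Number of leading zeros of a sequence; its parity decides how rule (a)
   and the merging rules act on a run of zeros. *)
Definition lead_zeros y : nat := find (fun a => a != 0) y.

Lemma lead_zeros0 y : lead_zeros (0 :: y) = (lead_zeros y).+1.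
Proof. by rewrite /lead_zeros /= eqxx. Qed.

Lemma lead_zeros_nz a y : a != 0 -> lead_zeros (a :: y) = 0%N.
Proof. by move=> na; rewrite /lead_zeros /= na. Qed.

Lemma lead_zeros_pos x : all (fun a => 0 < a) x -> lead_zeros x = 0%N.
Proof. by case: x => [|c x] // /andP [hc _]; rewrite lead_zeros_nz // gt_eqF. Qed.

(* [add_head a z] adds [a] to the first entry of [z]; this is the effect on
   [next_seq] of a positive entry followed by an odd run of zeros. *)
Definition add_head a z : seq R := if z is b :: z' then (b + a) :: z' else [::].

Lemma next_aux_addl cur a m z :
  next_aux (cur + a) m z = add_head a (next_aux cur m z).
Proof.
elim: z cur m => [|b z IH] cur m /=; first by case: (odd m).
case: (b == 0); first exact: IH.
by case: (odd m) => //; rewrite -addrA (addrC a) addrA IH.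
Qed.

Lemma next_aux_skip cur m z :
  next_aux cur m z = next_aux cur (m + lead_zeros z) (drop (lead_zeros z) z).
Proof.
elim: z m => [|b z IH] m /=; first by rewrite addn0.
rewrite /lead_zeros /=; case: (eqVneq b 0) => [->|nb] /=.
  by rewrite IH addSnnS.
by rewrite addn0 (negbTE nb).
Qed.

Lemma drop_lead_zeros_nz z : if drop (lead_zeros z) z is b :: _ then b != 0 else true.
Proof.
elim: z => [|b z IH] //=; rewrite /lead_zeros /=.
by case: (eqVneq b 0) => [->|nb] //=; rewrite eqxx.
Qed.

(* Rules (b) and (c') of Algorithm II only see the parity of a run of zeros:
   if [z] starts with an even run of zeros, then the current entry [cur]
   followed by [m] zeros and [z] is either merged with the first positive
   entry of [z] ([m] odd) or kept as a separate entry ([m] even). *)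
Lemma next_aux_even_run cur m z : ~~ odd (lead_zeros z) ->
  next_aux cur m z =
    if odd m then add_head cur (next_seq z) else cur :: next_seq z.
Proof.
move=> hz; rewrite next_aux_skip /next_seq -/(lead_zeros z).
have := drop_lead_zeros_nz z.
case: (drop _ z) => [|b z'] /=; rewrite oddD (negbTE hz) addbF; first by case: (odd m).
move=> nb; rewrite (negbTE nb); case: (odd m) => //.
by rewrite addrC next_aux_addl.
Qed.

Lemma next_seq0 y : next_seq (0 :: y) = next_seq y.
Proof. by rewrite /next_seq /= eqxx. Qed.

Lemma next_seq_nz c y : c != 0 -> next_seq (c :: y) = next_aux c 0 y.
Proof. by move=> nc; rewrite /next_seq /= nc. Qed.

Lemma next_seq_pos x : all (fun a => 0 < a) x -> next_seq x = x.
Proof.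
case: x => [|c x] //= /andP [hc hx]; rewrite next_seq_nz ?gt_eqF //.
elim: x c hx {hc} => [|a x IH] c //= /andP [ha hx].
by rewrite gt_eqF //= IH.
Qed.

Definition run_block y (i : nat) : seq R := nseq (uphalf (run_len y i)) (run_r y i).

Lemma J_ofE y : J_of y = flatten (map (run_block y) (run_starts y)).
Proof. by []. Qed.

Lemma nu_ofE y : nu_of y = size (J_of y).
Proof.
rewrite /nu_of J_ofE size_flatten /shape -map_comp sumnE big_map.
by apply: eq_bigr => i _; rewrite /= size_nseq.
Qed.

Lemma run_starts_cons a y : run_starts (a :: y) =
  if a == 0 then 0%N :: map S [seq i <- run_starts y | i != 0%N]
  else map S (run_starts y).
Proof.
rewrite /run_starts /=.
have -> : iota 1 (size y) = map S (iota 0 (size y)) by rewrite -(iotaDl 1).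
rewrite filter_map.
case: (eqVneq a 0) => [->|na] /=.
  rewrite -filter_predI; congr (_ :: map _ _); apply: eq_filter => -[|i] /=;
  by rewrite /preim /= ?eqxx /= ?andbF ?andbT.
by congr (map S _); apply: eq_filter => -[|i]; rewrite /preim /= ?na ?andbT.
Qed.

Lemma run_block_cons a y i :
  run_block (a :: y) i.+1 = map (fun w => a + w) (run_block y i).
Proof. by rewrite /run_block map_nseq /run_r big_ord_recl. Qed.

Lemma run_block0 y : run_block y 0 = nseq (uphalf (lead_zeros y)) 0.
Proof. by rewrite /run_block /run_r big_ord0 /run_len drop0. Qed.

Lemma filter_neq0_S (l : seq nat) : [seq i <- map S l | i != 0%N] = map S l.
Proof. by apply/all_filterP/allP => i /mapP [j _ ->]. Qed.

(* Split off the contribution of a leading run of zeros; this holds also when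
   [y] does not start with zero, the first block being then empty. *)
Lemma J_of_split y : J_of y =
  run_block y 0 ++ flatten [seq run_block y i | i <- run_starts y & i != 0%N].
Proof.
case: y => [|b y] //; rewrite J_ofE run_starts_cons.
case: (eqVneq b 0) => [->|nb] /=; first by rewrite filter_neq0_S.
by rewrite filter_neq0_S run_block0 lead_zeros_nz.
Qed.

Lemma J_of_nz a y : a != 0 -> J_of (a :: y) = map (fun w => a + w) (J_of y).
Proof.
move=> na; rewrite !J_ofE run_starts_cons (negbTE na) map_flatten -!map_comp.
by congr flatten; apply: eq_map => i /=; rewrite run_block_cons.
Qed.

Lemma J_of0 y :
  J_of (0 :: y) = (if odd (lead_zeros y) then [::] else [:: 0]) ++ J_of y.
Proof.
rewrite J_of_split run_starts_cons eqxx /= filter_neq0_S -map_comp.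
rewrite run_block0 lead_zeros0.
under eq_map => i do rewrite /= run_block_cons (eq_map (@add0r R)) map_id.
rewrite [J_of y]J_of_split run_block0 catA; congr (_ ++ _).
have -> : uphalf (lead_zeros y).+1 = (lead_zeros y)./2.+1 by [].
by rewrite uphalf_half; case: odd.
Qed.

Lemma J_of_pos x : all (fun a => 0 < a) x -> J_of x = [::].
Proof.
elim: x => [|a x IH] //= /andP [ha hx].
by rewrite J_of_nz ?IH // gt_eqF.
Qed.

(* The inverse of one step.  [unstep s J x] reinserts into the positive
   sequence [x] the runs of zeros recorded by the nondecreasing tuple [J]:
   scanning [x] from the left, [s] being the sum of the entries of [x]
   already consumed, the next value [v] of [J]
   - produces a new run [0, 0] if [v = s];
   - splits the next entry [c] into [v - s], [0], [s + c - v] if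
     [s < v < s + c] (rule (b) merges these back into [c]);
   - lets [c] through if [s + c <= v];
   - produces [v - s], [0] at the right end of [x] (this pair is deleted by
     rule (c')). *)
Fixpoint unstep s J x : seq R :=
  match J with
  | [::] => x
  | v :: J' =>
    let fix unstep_in s x :=
      match x with
      | [::] => if v == s then 0 :: 0 :: unstep s J' [::]
                else (v - s) :: 0 :: unstep v J' [::]
      | c :: x' => if v == s then 0 :: 0 :: unstep s J' x
                   else if v < s + c then (v - s) :: 0 :: unstep v J' ((s + c - v) :: x')
                   else c :: unstep_in (s + c) x'
      end in unstep_in s x
  end.

Lemma unstep_eq s J x : unstep s (s :: J) x = 0 :: 0 :: unstep s J x.
Proof. by case: x => [|c x] /=; rewrite eqxx. Qed.

Lemma unstep_split s v c J x : s < v -> v < s + c ->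
  unstep s (v :: J) (c :: x) = (v - s) :: 0 :: unstep v J ((s + c - v) :: x).
Proof. by move=> sv vc /=; rewrite gt_eqF // vc. Qed.

Lemma unstep_pass s v c J x : 0 < c -> s + c <= v ->
  unstep s (v :: J) (c :: x) = c :: unstep (s + c) (v :: J) x.
Proof.
move=> c0 cv /=; rewrite gt_eqF ?(lt_le_trans _ cv) ?ltrDl //.
by rewrite ltNge cv.
Qed.

Lemma unstep_end s v J : s < v ->
  unstep s (v :: J) [::] = (v - s) :: 0 :: unstep v J [::].
Proof. by move=> sv /=; rewrite gt_eqF. Qed.

Definition admissible s J x : bool :=
  [&& sorted <=%R J, all (fun w => s <= w) J & all (fun a => 0 < a) x].

Lemma admissible_pos s J x : admissible s J x -> all (fun a => 0 < a) x.
Proof. by case/and3P. Qed.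

Lemma admissible_ind (P : R -> seq R -> seq R -> Prop) :
  (forall s x, all (fun a => 0 < a) x -> P s [::] x) ->
  (forall s J x, admissible s J x -> P s J x -> P s (s :: J) x) ->
  (forall s v c J x, s < v -> v < s + c -> admissible v J ((s + c - v) :: x) ->
     P v J ((s + c - v) :: x) -> P s (v :: J) (c :: x)) ->
  (forall s v c J x, 0 < c -> s + c <= v -> admissible (s + c) (v :: J) x ->
     P (s + c) (v :: J) x -> P s (v :: J) (c :: x)) ->
  (forall s v J, s < v -> admissible v J [::] -> P v J [::] -> P s (v :: J) [::]) ->
  forall s J x, admissible s J x -> P s J x.
Proof.
move=> Pnil Peq Psplit Ppass Pend s J; elim: J s => [|v J IH] s x.
  by move=> /and3P [_ _ /Pnil].
move=> /and3P [/= Jv /andP [sv sJ] px].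
have [Jsorted vJ] : sorted <=%R J /\ all (fun w => v <= w) J.
  by split; [exact: path_sorted Jv | exact: order_path_min le_trans Jv].
have admJ t y : t <= v -> all (fun a => 0 < a) y -> admissible t J y.
  by move=> tv py; apply/and3P; split=> //; apply/allP => w /(allP vJ); apply: le_trans.
have [<-|nvs] := eqVneq v s.
  by have aJ := admJ _ _ (lexx v) px; apply: Peq aJ (IH _ _ aJ).
have {nvs}sv : s < v by rewrite lt_def nvs.
elim: x s sv sJ px => [|c x IHx] s sv sJ /=.
  by move=> _; have aJ := admJ _ [::] (lexx v) isT; apply: Pend sv aJ (IH _ _ aJ).
move=> /andP [c0 px]; have [vc|cv] := ltP v (s + c).
  have px' : all (fun a => 0 < a) ((s + c - v) :: x) by rewrite /= subr_gt0 vc.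
  by have aJ := admJ _ _ (lexx v) px'; apply: Psplit sv vc aJ (IH _ _ aJ).
have sJ' : all (fun w => s + c <= w) J by apply/allP => w /(allP vJ); apply: le_trans.
have adm' : admissible (s + c) (v :: J) x by rewrite /admissible /= Jv cv sJ' px.
apply: (Ppass _ _ _ _ _ c0 cv adm').
have [<-|ncv] := eqVneq v (s + c).
  by have aJ := admJ _ _ (lexx v) px; apply: Peq aJ (IH _ _ aJ).
by apply: IHx sJ' px; rewrite lt_def ncv.
Qed.

Lemma lead_zeros_unstep s J x :
  admissible s J x -> ~~ odd (lead_zeros (unstep s J x)).
Proof.
move: s J x; apply: admissible_ind.
- by move=> s x px; rewrite lead_zeros_pos.
- by move=> s J x _ IH; rewrite unstep_eq !lead_zeros0 /= negbK.
- move=> s v c J x sv vc _ _.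
  by rewrite unstep_split // lead_zeros_nz // subr_eq0 gt_eqF.
- by move=> s v c J x c0 cv _ _; rewrite unstep_pass // lead_zeros_nz // gt_eqF.
- by move=> s v J sv _ _; rewrite unstep_end // lead_zeros_nz // subr_eq0 gt_eqF.
Qed.

Lemma J_of_unstep s J x :
  admissible s J x -> J_of (unstep s J x) = map (fun w => w - s) J.
Proof.
have J_of_even z : ~~ odd (lead_zeros z) -> J_of (0 :: z) = 0 :: J_of z.
  by move=> hz; rewrite J_of0 (negbTE hz).
move: s J x; apply: admissible_ind.
- by move=> s x px; rewrite J_of_pos.
- move=> s J x aJ IH; rewrite unstep_eq J_of0 lead_zeros0 /= lead_zeros_unstep //=.
  by rewrite J_of_even ?lead_zeros_unstep // IH subrr.
- move=> s v c J x sv vc aJ IH.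
  rewrite unstep_split // J_of_nz ?subr_eq0 ?gt_eqF // J_of_even ?lead_zeros_unstep //.
  rewrite IH /= addr0 -map_comp; congr (_ :: _); apply: eq_map => w /=; ring.
- move=> s v c J x c0 cv aJ IH.
  rewrite unstep_pass // J_of_nz ?gt_eqF // IH -map_comp.
  by apply: eq_map => w /=; ring.
- move=> s v J sv aJ IH.
  rewrite unstep_end // J_of_nz ?subr_eq0 ?gt_eqF // J_of_even ?lead_zeros_unstep //.
  rewrite IH /= addr0 -map_comp; congr (_ :: _); apply: eq_map => w /=; ring.
Qed.

Lemma next_seq_unstep s J x :
  admissible s J x -> next_seq (unstep s J x) = x.
Proof.
move: s J x; apply: admissible_ind.
- by move=> s x px; rewrite next_seq_pos.
- by move=> s J x _ IH; rewrite unstep_eq !next_seq0.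
- move=> s v c J x sv vc aJ IH.
  rewrite unstep_split // next_seq_nz ?subr_eq0 ?gt_eqF //= eqxx.
  by rewrite next_aux_even_run ?lead_zeros_unstep // IH /=; congr (_ :: _); ring.
- move=> s v c J x c0 cv aJ IH.
  rewrite unstep_pass // next_seq_nz ?gt_eqF //.
  by rewrite next_aux_even_run ?lead_zeros_unstep ?IH.
- move=> s v J sv aJ IH.
  rewrite unstep_end // next_seq_nz ?subr_eq0 ?gt_eqF //= eqxx.
  by rewrite next_aux_even_run ?lead_zeros_unstep // IH.
Qed.

Lemma size_unstep s J x :
  admissible s J x -> size (unstep s J x) = (size x + (size J).*2)%N.
Proof.
move: s J x; apply: admissible_ind.
- by move=> s x _; rewrite addn0.
- by move=> s J x _ IH; rewrite unstep_eq /= IH doubleS !addnS.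
- by move=> s v c J x sv vc _ IH; rewrite unstep_split //= IH /= doubleS !addnS !addSn.
- by move=> s v c J x c0 cv _ IH; rewrite unstep_pass //= IH /= addSn.
- by move=> s v J sv _ IH; rewrite unstep_end //= IH /= doubleS.
Qed.

Lemma unstep_has0 s J x :
  admissible s J x -> J != [::] -> 0 \in unstep s J x.
Proof.
move: s J x; apply: admissible_ind => //.
- by move=> s J x _ _ _; rewrite unstep_eq mem_head.
- by move=> s v c J x sv vc _ _ _; rewrite unstep_split // !inE eqxx orbT.
- by move=> s v c J x c0 cv _ IH _; rewrite unstep_pass // inE IH ?orbT.
- by move=> s v J sv _ _ _; rewrite unstep_end // !inE eqxx orbT.
Qed.

Lemma unstep_ge0 s J x :
  admissible s J x -> all (fun a => 0 <= a) (unstep s J x).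
Proof.
move: s J x; apply: admissible_ind.
- by move=> s x px; apply/allP => a /(allP px) /ltW.
- by move=> s J x _ IH; rewrite unstep_eq /= lexx IH.
- move=> s v c J x sv vc _ IH.
  by rewrite unstep_split //= subr_ge0 (ltW sv) lexx IH.
- by move=> s v c J x c0 cv _ IH; rewrite unstep_pass //= (ltW c0) IH.
- by move=> s v J sv _ IH; rewrite unstep_end //= subr_ge0 (ltW sv) lexx IH.
Qed.

Lemma sum_pos_ge0 x : all (fun a => 0 < a) x -> 0 <= \sum_(a <- x) a.
Proof. by move=> px; rewrite big_seq sumr_ge0 // => a /(allP px) /ltW. Qed.

Lemma sum_unstep B s J x : admissible s J x ->
  (s + \sum_(a <- unstep s J x) a <= B) =
  (s + \sum_(a <- x) a <= B) && all (fun w => w <= B) J.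
Proof.
move: s J x; apply: admissible_ind.
- by move=> s x _; rewrite andbT.
- move=> s J x aJ IH; rewrite unstep_eq !big_cons !add0r IH /= andbA.
  congr andb; apply/esym/andb_idr; apply: le_trans.
  by rewrite lerDl sum_pos_ge0 // (admissible_pos aJ).
- move=> s v c J x sv vc aJ IH; rewrite unstep_split // !big_cons add0r.
  rewrite addrA subrKC IH big_cons /= andbA.
  have -> : v + (s + c - v + \sum_(a <- x) a) = s + (c + \sum_(a <- x) a) by ring.
  congr andb; apply/esym/andb_idr => h; apply: le_trans h; rewrite addrA.
  apply: (le_trans (ltW vc)); rewrite lerDl sum_pos_ge0 //.
  by move: (admissible_pos aJ) => /andP [].
- by move=> s v c J x c0 cv _ IH; rewrite unstep_pass // !big_cons !addrA IH.
- move=> s v J sv _ IH; rewrite unstep_end // !big_cons add0r.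
  rewrite addrA subrKC IH !big_nil !addr0 /= andbA.
  by congr andb; apply/esym/andb_idl; apply: le_trans (ltW sv).
Qed.

Definition hw_from t x : bool :=
  all (fun k => 0 <= t + \sum_(i < k) (x`_(i.*2) - x`_(i.*2.+1)))
      (iota 1 (size x)./2).

Lemma hw_from0 x : hw_from 0 x = hw x.
Proof. by apply: eq_all => k; rewrite add0r. Qed.

Lemma hw_from_cons2 t a b x :
  hw_from t [:: a, b & x] = (0 <= t + (a - b)) && hw_from (t + (a - b)) x.
Proof.
rewrite /hw_from /=.
have -> : iota 2 (size x)./2 = map S (iota 1 (size x)./2) by rewrite -(iotaDl 1).
rewrite all_map big_ord1 /=; congr andb; apply: eq_all => k /=.
by rewrite big_ord_recl /= addrA.
Qed.

Lemma seq2_ind (T : Type) (P : seq T -> Prop) :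
  P [::] -> (forall u : T, P [:: u]) ->
  (forall (u w : T) (l : seq T), P l -> P [:: u, w & l]) -> forall l, P l.
Proof.
move=> P0 P1 P2 l; suff [] : P l /\ forall u, P (u :: l) by [].
by elim: l => [|w l [IH1 IH2]]; split => // u; apply: P2.
Qed.

(* Only differences of consecutive entries matter. *)
Lemma hw_from_shift t c x : hw_from t (map (fun a => a + c) x) = hw_from t x.
Proof.
elim/seq2_ind: x t => [|a|a b x IH] t //.
by rewrite /= !hw_from_cons2 IH; have -> : a + c - (b + c) = a - b by ring.
Qed.

Definition signed (b : bool) a : R := if b then a else - a.

Fixpoint alt_nonneg t (b : bool) x : bool :=
  if x is a :: x' then (0 <= t + signed b a) && alt_nonneg (t + signed b a) (~~ b) x'
  else true.

(* For a nonnegative sequence the partial sums of odd length are implied by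
   those of even length, so the highest weight condition checks all of them. *)
Lemma hw_from_alt t x : all (fun a => 0 <= a) x -> 0 <= t ->
  hw_from t x = alt_nonneg t true x.
Proof.
elim/seq2_ind: x t => [|a|a b x IH] t //=.
  by move=> /andP [ha _] ht; rewrite addr_ge0.
move=> /and3P [ha hb hx] ht; rewrite hw_from_cons2 -addrA.
case: (leP 0 (t + (a - b))) => [h|_]; last by rewrite andbF.
by rewrite IH // (addr_ge0 ht ha).
Qed.

(* [unstep] inserts pairs of zeros and splits entries; neither changes the
   alternating sums condition. *)
Lemma alt_nonneg_unstep s J x : admissible s J x -> forall t, 0 <= t ->
  alt_nonneg t (~~ odd (size x)) (unstep s J x) = alt_nonneg t (~~ odd (size x)) x.
Proof.
move: s J x; apply: admissible_ind.
- by [].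
- move=> s J x _ IH t ht.
  by rewrite unstep_eq /= /signed oppr0 !if_same !addr0 negbK ht IH.
- move=> s v c J x sv vc _ IH t ht; move: IH.
  rewrite unstep_split //= /signed !negbK oppr0 if_same addr0.
  have E1 : t + (v - s) + (s + c - v) = t + c by ring.
  have E2 : t + - (v - s) + - (s + c - v) = t + - c by ring.
  case: (odd (size x)) => IH /=.
    have h1 : 0 <= t + (v - s) by rewrite addr_ge0 // subr_ge0 ltW.
    by rewrite IH // h1 /= E1.
  case: (leP 0 (t - (v - s))) => h /=; first by rewrite IH //= E2.
  have : t - c < 0 by lra.
  by rewrite ltNge => /negbTE ->.
- move=> s v c J x c0 cv _ IH t ht; rewrite unstep_pass //=.
  by rewrite !negbK; case: (leP 0 _) => //= h; rewrite IH.
- move=> s v J sv _ IH t ht; rewrite unstep_end //= /signed oppr0 addr0.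
  have h : 0 <= t + (v - s) by rewrite addr_ge0 // subr_ge0 ltW.
  by rewrite h IH.
Qed.

Lemma hw_unstep J x : admissible 0 J x -> ~~ odd (size x) ->
  hw (unstep 0 J x) = hw x.
Proof.
move=> aJ ev; have px := admissible_pos aJ.
have x0 : all (fun a => 0 <= a) x by apply/allP => a /(allP px) /ltW.
rewrite -!hw_from0 !hw_from_alt ?unstep_ge0 //.
by have := alt_nonneg_unstep aJ (lexx 0); rewrite (negbTE ev).
Qed.

(* A nonnegative highest weight sequence cannot start with an odd run of
   zeros: a zero at an odd position must be followed by a zero. *)
Lemma hw_lead_zeros y : all (fun a => 0 <= a) y -> ~~ odd (size y) -> hw y ->
  ~~ odd (lead_zeros y).
Proof.
rewrite -hw_from0; elim/seq2_ind: y => [|a|a b y IH]; [by [] | by [] |].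
move=> /and3P [ha hb hy] ev; rewrite hw_from_cons2.
have [->|na] := eqVneq a 0; last by rewrite lead_zeros_nz.
rewrite lead_zeros0 sub0r add0r oppr_ge0 => /andP [b0 hwy].
have b_eq0 : b = 0 by apply/eqP; rewrite eq_le b0 hb.
rewrite b_eq0 lead_zeros0 /= negbK; apply: IH => //; first by move: ev; rewrite /= negbK.
by move: hwy; rewrite b_eq0 oppr0.
Qed.

Lemma admissible_eq s J x : admissible s J x -> admissible s (s :: J) x.
Proof.
case/and3P=> Js sJ px; apply/and3P; split=> //=; last by rewrite lexx.
by rewrite path_sortedE; [apply/andP | exact: le_trans].
Qed.

Lemma unstep_pos_head s a J x : 0 < a -> admissible (s + a) J x ->
  admissible s J (a :: x) /\ unstep s J (a :: x) = a :: unstep (s + a) J x.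
Proof.
move=> a0 /and3P [Js sJ px].
have sJ' : all (fun w => s <= w) J.
  by apply/allP => w /(allP sJ); apply: le_trans; rewrite lerDl ltW.
split; first by rewrite /admissible Js sJ' /= a0.
by case: J Js sJ {sJ'} => [|v J] // _ /andP [av _]; rewrite unstep_pass.
Qed.

(* A positive entry [a] followed by an odd run of zeros is produced by
   [unstep] from a value [s + a] of [J], splitting the next entry of [x]
   (or at the right end of [x]). *)
Lemma unstep_odd_run s a J x : 0 < a -> admissible (s + a) J x ->
  exists J' x', admissible s J' x' /\ a :: 0 :: unstep (s + a) J x = unstep s J' x'.
Proof.
move=> a0 aJ; have s_lt : s < s + a by rewrite ltrDl.
have aJ' := admissible_eq aJ; case/and3P: aJ' => Js sJ _.
have sJ' : all (fun w => s <= w) ((s + a) :: J).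
  by apply/allP => w /(allP sJ); apply: le_trans; rewrite ltW.
case: x aJ => [|c x] aJ; exists ((s + a) :: J).
  by exists [::]; rewrite /admissible Js sJ' unstep_end // addrC addrK.
have /andP [c0 px] := admissible_pos aJ.
exists ((a + c) :: x); split.
  by apply/and3P; split=> //=; rewrite addr_gt0.
rewrite unstep_split // ?addrA ?ltrDl // addrC addrK.
by congr (_ :: _ :: unstep _ _ (_ :: _)); ring.
Qed.

Lemma unstep_surj s y : all (fun a => 0 <= a) y -> ~~ odd (lead_zeros y) ->
  exists J x, admissible s J x /\ y = unstep s J x.
Proof.
move: {2}(size y) (leqnn (size y)) => n; elim: n y s => [|n IH] y s.
  by case: y => // _ _ _; exists [::], [::].
case: y => [_ _ _|a y sz /andP [a0 y0]]; first by exists [::], [::].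
have {}sz : (size y <= n)%N := sz.
have [->|na] := eqVneq a 0.
  case: y sz y0 => [|b y] sz; first by rewrite lead_zeros0.
  move=> /andP [b0 y0].
  have [->|nb] := eqVneq b 0; last by rewrite lead_zeros0 lead_zeros_nz.
  rewrite !lead_zeros0 /= negbK => ev.
  have [J [x [aJ ->]]] := IH y s (ltnW sz) y0 ev.
  by exists (s :: J), x; rewrite unstep_eq admissible_eq.
have {}a0 : 0 < a by rewrite lt_def na.
rewrite lead_zeros_nz // => _.
case ev: (odd (lead_zeros y)).
  case: y sz y0 ev => [|b y] // sz /andP [b0 y0].
  have [->|nb] := eqVneq b 0; last by rewrite lead_zeros_nz.
  rewrite lead_zeros0 /= => ev.
  have [J [x [aJ ->]]] := IH y (s + a) (ltnW sz) y0 ev.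
  exact: unstep_odd_run.
have [J [x [aJ ->]]] := IH y (s + a) sz y0 (negbT ev).
by have [aJ' <-] := unstep_pos_head a0 aJ; exists J, (a :: x).
Qed.

Lemma foldr_min_spec h x : let m := foldr Num.min h x in
  [/\ m \in h :: x, m <= h & all (fun a => m <= a) x].
Proof.
elim: x => [|a x [IHin IHh IHx]] /=; first by rewrite mem_head lexx.
rewrite minEle; case: leP => ha.
- rewrite !inE eqxx orbT (le_trans ha IHh) lexx /=; split=> //.
  by apply/allP => w /(allP IHx); apply: le_trans.
- split; [by move: IHin; rewrite !inE => /orP [] ->; rewrite ?orbT | by [] |].
  by rewrite (ltW ha).
Qed.

Lemma minseq_eq x m : m \in x -> all (fun a => m <= a) x -> minseq x = m.
Proof.
case: x => [|h x] // mx hm; rewrite -[minseq _]/(foldr Num.min h (h :: x)).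
have [min_in _ min_le] := foldr_min_spec h (h :: x).
apply/le_anti; rewrite (allP min_le m mx) /=.
by apply: (allP hm); move: min_in; rewrite [in X in X -> _]inE orbA orbb.
Qed.

Lemma minseq_spec x : x != [::] ->
  minseq x \in x /\ all (fun a => minseq x <= a) x.
Proof.
case: x => [|h x] // _; rewrite -[minseq _]/(foldr Num.min h (h :: x)).
have [min_in _ min_le] := foldr_min_spec h (h :: x).
by split=> //; move: min_in; rewrite [in X in X -> _]inE orbA orbb.
Qed.

Lemma hw_shift c x : hw (map (fun a => a + c) x) = hw x.
Proof. by rewrite -!hw_from0 hw_from_shift. Qed.

Lemma map_addK mu y : map (fun a => a - mu) (map (fun a => a + mu) y) = y.
Proof. by rewrite -map_comp (eq_map (fun a => addrK mu a)) map_id. Qed.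

Lemma sum_shift_const c x :
  \sum_(a <- map (fun a => a + c) x) a = \sum_(a <- x) a + (size x)%:R * c.
Proof.
elim: x => [|a x IH]; first by rewrite !big_nil mul0r addr0.
by rewrite /= !big_cons IH -addn1 natrD; ring.
Qed.

Definition step_inv mu J x : seq R := map (fun a => a + mu) (unstep 0 J x).

Definition inPN L (N : nat) x : bool :=
  [&& size x == N.*2, all (fun a => 0 < a) x, hw x & \sum_(a <- x) a <= L].

Lemma size_step_inv mu J x : admissible 0 J x ->
  size (step_inv mu J x) = (size x + (size J).*2)%N.
Proof. by move=> aJ; rewrite size_map size_unstep. Qed.

Lemma step_inv_pos mu J x : 0 < mu -> admissible 0 J x ->
  all (fun a => 0 < a) (step_inv mu J x).
Proof.
move=> mu0 aJ; apply/allP => _ /mapP [b /(allP (unstep_ge0 aJ)) b0 ->].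
by rewrite ltr_wpDl.
Qed.

(* The bound on the sum of the entries after a step removing [mu] from the
   [2 N] entries: [L^(i+1) = L^(i) - 2 N^(i) mu^(i)]. *)
Definition next_bound L mu (N : nat) : R := L - 2 * N%:R * mu.

Lemma inPN_step L mu J x (N : nat) : 0 < mu -> admissible 0 J x ->
  let L' := next_bound L mu (size J + N) in
  inPN L (size J + N) (step_inv mu J x) = inPN L' N x && all (fun w => w <= L') J.
Proof.
move=> mu0 aJ L'; rewrite /inPN size_step_inv // doubleD addnC eqn_add2l.
have [sx|] := eqP; last by [].
rewrite step_inv_pos // (admissible_pos aJ) hw_shift hw_unstep ?sx ?odd_double //=.
case: (hw x) => //=; rewrite /step_inv sum_shift_const size_unstep // sx -doubleD.
have := sum_unstep L' aJ; rewrite !add0r => <-.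
by rewrite /L' /next_bound lerBrDr -muln2 natrM addnC; congr (_ + _ <= _); ring.
Qed.

Lemma algo_step f mu J x (N : nat) :
  0 < mu -> J != [::] -> admissible 0 J x -> size x = N.*2 -> hw x ->
  algo f.+1 (size J + N) (step_inv mu J x) =
  if N == 0%N then Some [:: (mu, size J, J)]
  else omap (cons (mu, size J, J)) (algo f N x).
Proof.
move=> mu0 nJ aJ sx hx; have y0 := unstep_ge0 aJ.
have J_ofJ : J_of (unstep 0 J x) = J.
  by rewrite J_of_unstep // (eq_map (@subr0 R)) map_id.
have min_mu : minseq (step_inv mu J x) = mu.
  apply: minseq_eq; first by apply/mapP; exists 0; rewrite ?add0r ?unstep_has0.
  by apply/allP => _ /mapP [b /(allP y0) b0 ->]; rewrite lerDr.
rewrite /= size_step_inv // sx -doubleD addnC eqxx step_inv_pos //.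
rewrite hw_shift hw_unstep ?sx ?odd_double // hx /= min_mu map_addK.
by rewrite nu_ofE J_ofJ ltnNge leq_addr /= addKn next_seq_unstep.
Qed.

Lemma step_decompose x : x != [::] -> all (fun a => 0 < a) x ->
  ~~ odd (size x) -> hw x ->
  exists J x', [/\ J != [::], admissible 0 J x' & x = step_inv (minseq x) J x'].
Proof.
move=> nx px ev hx; have [min_in min_le] := minseq_spec nx.
set mu := minseq x in min_in min_le *; set y := map (fun a => a - mu) x.
have y0 : all (fun a => 0 <= a) y.
  by apply/allP => _ /mapP [b /(allP min_le) hb ->]; rewrite subr_ge0.
have xE : x = map (fun a => a + mu) y.
  by rewrite -map_comp (eq_map (fun a => subrK mu a)) map_id.
have ev_zeros : ~~ odd (lead_zeros y).
  by apply: hw_lead_zeros; rewrite ?size_map // -(hw_shift mu) -xE.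
have [J [x' [aJ yE]]] := unstep_surj 0 y0 ev_zeros.
exists J, x'; split=> //; last by rewrite /step_inv -yE.
apply: contraTneq (map_f (fun a => a - mu) min_in) => J0.
rewrite -/y yE J0 /= subrr; apply/negP => /(allP (admissible_pos aJ)).
by rewrite ltxx.
Qed.

Lemma Nsup_cons0 mu nu J d : Nsup ((mu, nu, J) :: d) 0 = (nu + Nsup d 0)%N.
Proof. by rewrite /Nsup /= big_nat_recl. Qed.

Lemma Nsup_consS mu nu J d i : Nsup ((mu, nu, J) :: d) i.+1 = Nsup d i.
Proof.
rewrite /Nsup /= -addn1 big_addn subn1.
by apply: eq_bigr => j _; rewrite addn1.
Qed.

Lemma lam_cons0 mu nu J d : lam ((mu, nu, J) :: d) 0 = mu.
Proof. by rewrite /lam big_ord1. Qed.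

Lemma lam_consS mu nu J d i : lam ((mu, nu, J) :: d) i.+1 = mu + lam d i.
Proof. by rewrite /lam big_ord_recl. Qed.

Lemma lam_ge0 d : (forall i, (i < size d)%N -> 0 < (mus d)`_i) ->
  forall i, 0 <= lam d i.
Proof.
move=> mu0 i; apply: sumr_ge0 => l _; case: (ltnP l (size d)) => hl.
  exact: ltW (mu0 _ hl).
by rewrite nth_default ?size_map.
Qed.

Lemma sum_nus d : (\sum_(k < size d) (nth 0%N (nus d) k)%:R : R) = (Nsup d 0)%:R.
Proof. by rewrite /Nsup big_mkord natr_sum. Qed.

Section DataCons.
Variables (L mu : R) (nu : nat) (J : seq R) (d : data R).
Hypothesis lam_d_ge0 : forall i, 0 <= lam d i.
Let L' := next_bound L mu (nu + Nsup d 0).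

Lemma qbd_cons0 : qbd L ((mu, nu, J) :: d) 0 = L'.
Proof.
rewrite /qbd /= big_ord_recl lam_cons0 minEle lexx /=.
under eq_bigr => i _ do rewrite /bump /= add1n lam_consS minEle lerDl lam_d_ge0.
by rewrite -mulr_sumr sum_nus /L' /next_bound natrD; ring.
Qed.

Lemma qbd_consS i : qbd L ((mu, nu, J) :: d) i.+1 = qbd L' d i.
Proof.
rewrite /qbd /= big_ord_recl lam_consS lam_cons0.
have -> : Num.min (mu + lam d i) mu = mu.
  by apply/min_idPr; rewrite lerDl.
rewrite /=.
under eq_bigr => k _ do rewrite /bump /= ?add1n lam_consS -addr_minr mulrDl.
by rewrite big_split /= -mulr_sumr sum_nus /L' /next_bound natrD; ring.
Qed.

Lemma sum_cond_cons :
  let d' := (mu, nu, J) :: d in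
  \sum_(i < size d') (Nsup d' i)%:R * (mus d')`_i
  = (nu + Nsup d 0)%:R * mu + \sum_(i < size d) (Nsup d i)%:R * (mus d)`_i.
Proof.
rewrite /= big_ord_recl Nsup_cons0; congr (_ + _).
by apply: eq_bigr => i _; rewrite Nsup_consS.
Qed.

End DataCons.

Lemma half_bound L P S : (P + S <= L / 2) = (S <= (L - 2 * P) / 2).
Proof. by apply/idP/idP => h; lra. Qed.

Lemma inR_cons L mu nu J d :
  let L' := next_bound L mu (nu + Nsup d 0) in
  inRdata L ((mu, nu, J) :: d) <->
  [/\ 0 < mu, (0 < nu)%N, size J = nu, sorted <=%R J & all (fun t => 0 <= t <= L') J]
  /\ (d = [::] \/ inRdata L' d).
Proof.
move=> L'; split.
- case=> _ mu0 nu0 hsum hJ.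
  have mu0' i : (i < size d)%N -> 0 < (mus d)`_i := mu0 i.+1.
  have lam0 := lam_ge0 mu0'.
  have [sJ Js JL] := hJ 0%N isT; rewrite /= qbd_cons0 // in JL.
  split; first by split=> //; [exact: mu0 0%N isT | exact: nu0 0%N isT].
  case: d {sJ Js JL} mu0 nu0 hsum hJ mu0' lam0 @L' => [|p d] mu0 nu0 hsum hJ mu0' lam0 L';
    [by left | right].
  split=> //.
  + by move=> i; apply: nu0 i.+1.
  + by move: hsum; rewrite sum_cond_cons half_bound /L' /next_bound -mulrA.
  + by move=> i hi; have := hJ i.+1 hi; rewrite /= qbd_consS.
- case=> -[mu0 nu0 sJ Js JL] hd.
  have mu0' : forall i, (i < size d)%N -> 0 < (mus d)`_i by case: hd => [->|[]].
  have lam0 := lam_ge0 mu0'.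
  split=> // [[|i] hi|[|i] hi||[|i] hi] //=; first exact: mu0'.
  + by case: hd hi => [->|[_ _ h _ _]] //; exact: h.
  + rewrite sum_cond_cons half_bound mulrA; case: hd => [d0|[_ _ _ h _]] //.
    case: J sJ JL {Js} => [|t J] sJ; first by rewrite -sJ in nu0.
    move=> /andP [/andP [t0 tL] _]; move: tL.
    by rewrite /L' /next_bound d0 big_ord0 => tL; lra.
  + by rewrite qbd_cons0.
  + by rewrite qbd_consS; case: hd hi => [->|[_ _ _ _ h]] //; exact: h.
Qed.

Fixpoint psi d : seq R :=
  if d is (mu, nu, J) :: d' then step_inv mu J (psi d') else [::].

Lemma Nsup_pos L d : inRdata L d -> (0 < Nsup d 0)%N.
Proof.
case: d => [[]|[[mu nu] J] d] // /inR_cons [[_ nu0 _ _ _] _].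
by rewrite Nsup_cons0 ltn_addr.
Qed.

Lemma Nsup_nil i : Nsup (@nil (R * nat * seq R)) i = 0%N.
Proof. by rewrite /Nsup big_geq. Qed.

Lemma psi_spec L d : inRdata L d ->
  inPN L (Nsup d 0) (psi d) /\
  forall f, (Nsup d 0 <= f)%N -> algo f (Nsup d 0) (psi d) = Some d.
Proof.
elim: d L => [L []//|[[mu nu] J] d IH] L /inR_cons [[mu0 nu0 sJ Js JL] hd].
subst nu.
set L' := next_bound _ _ _ in JL hd.
have [J0 JL'] : all (fun w => 0 <= w) J /\ all (fun w => w <= L') J.
  by split; apply/allP => w /(allP JL) /andP [].
have [inx algx] : inPN L' (Nsup d 0) (psi d) /\
    (d != [::] -> forall f, (Nsup d 0 <= f)%N -> algo f (Nsup d 0) (psi d) = Some d).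
  case: hd => [->|/IH [] //]; split=> //; rewrite /inPN /= big_nil.
  have [t tJ] : exists t, t \in J.
    by case: (J) nu0 => [|t J' _] //; exists t; rewrite mem_head.
  have /andP [t0 tL] := allP JL t tJ.
  by rewrite Nsup_nil /= (le_trans t0 tL).
have aJ : admissible 0 J (psi d) by rewrite /admissible Js J0; case/and4P: inx.
have nJ : J != [::] by rewrite -size_eq0 -lt0n.
rewrite Nsup_cons0 /= inPN_step // inx JL'; split=> // -[|f] hf.
  by move: hf; rewrite leqn0 addn_eq0 eqn0Ngt nu0.
case/and4P: inx => /eqP sx _ hx _; rewrite (algo_step _ mu0 nJ aJ sx hx).
case: hd => [d0|dR]; first by rewrite d0 Nsup_nil.
rewrite eqn0Ngt (Nsup_pos dR) /= algx //.
- by apply/eqP => d0; rewrite d0 in dR; case: dR.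
- by move: nu0 hf; lia.
Qed.

Lemma phi_spec L (N : nat) x : (0 < N)%N -> inPN L N x ->
  exists d, [/\ inRdata L d, psi d = x, Nsup d 0 = N &
                forall f, (N <= f)%N -> algo f N x = Some d].
Proof.
elim/ltn_ind: N L x => N IH L x N0 inx; have := inx; case/and4P=> /eqP sx px hx _.
have nx : x != [::] by rewrite -size_eq0 sx double_eq0 -lt0n.
have mu0 : 0 < minseq x by have [min_in _] := minseq_spec nx; exact: (allP px).
have ev : ~~ odd (size x) by rewrite sx odd_double.
have [J [x' [nJ aJ xE]]] := step_decompose nx px ev hx.
set mu := minseq x in mu0 xE; have J0 : (0 < size J)%N by rewrite lt0n size_eq0.
have sxE : (size x' + (size J).*2 = N.*2)%N by rewrite -sx xE size_step_inv.
set N' := (N - size J)%N; have NE : N = (size J + N')%N by lia.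
have sx' : size x' = N'.*2 by lia.
have := inPN_step L N' mu0 aJ; rewrite -NE -xE inx => /esym /andP [inx' JL'].
have Jhead : [/\ 0 < mu, (0 < size J)%N, size J = size J, sorted <=%R J &
                 all (fun t => 0 <= t <= next_bound L mu N) J].
  case/and3P: aJ => Js J0' _; split=> //.
  by apply/allP => t tJ; rewrite (allP J0' t tJ) (allP JL' t tJ).
have hx' : hw x' by case/and4P: inx'.
have [N'0|N'pos] := posnP N'.
  have x'0 : x' = [::] by apply/nilP; rewrite /nilp sx' N'0.
  have NJ : N = size J by rewrite NE N'0 addn0.
  exists [:: (mu, size J, J)]; rewrite Nsup_cons0 Nsup_nil addn0; split=> //.
  - apply/inR_cons; rewrite Nsup_nil addn0 -NJ; split; last by left.
    by move: Jhead; rewrite -NJ.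
  - by rewrite /= xE x'0.
  - case=> [|f] hf; first by move: N0 hf; lia.
    by rewrite {1}NE xE (algo_step _ mu0 nJ aJ sx' hx') N'0.
have [d' [dR pd Nd algd]] := IH N' (ltac:(lia)) _ _ N'pos inx'.
exists ((mu, size J, J) :: d'); rewrite Nsup_cons0 Nd -NE; split=> //.
- by apply/inR_cons; rewrite Nd -NE; split=> //; right.
- by rewrite /= pd xE.
- case=> [|f] hf; first by move: N0 hf; lia.
  rewrite {1}NE xE (algo_step _ mu0 nJ aJ sx' hx') eqn0Ngt N'pos /= algd //.
  by move: hf; lia.
Qed.

Lemma inP_inPN L x : inP L x -> (0 < (size x)./2)%N /\ inPN L (size x)./2 x.
Proof.
case/and5P=> ev sx0 px sumx hx; rewrite /inPN even_halfK // eqxx px hx sumx.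
by rewrite -double_gt0 even_halfK.
Qed.

Lemma inPN_inP L (N : nat) x : (0 < N)%N -> inPN L N x -> inP L x.
Proof.
move=> N0 /and4P [/eqP sx px hx sumx].
by rewrite /inP sx odd_double double_gt0 N0 px sumx hx.
Qed.

Lemma phi_algo (N : nat) x : size x = N.*2 -> phi x = algo N.*2 N x.
Proof. by move=> sx; rewrite /phi sx doubleK. Qed.

Lemma phi_inP L x : inP L x -> exists d, [/\ phi x = Some d, inRdata L d & psi d = x].
Proof.
move=> /inP_inPN [N0 inx]; have [d [dR pd _ algd]] := phi_spec N0 inx.
exists d; split=> //; case/and4P: inx => /eqP sx _ _ _.
by rewrite (phi_algo sx) algd // -addnn leq_addr.
Qed.

End AlgorithmII.

Unset Implicit Arguments. Set Strict Implicit.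

Theorem mainTheorem11 (R : realFieldType) (L : R) (hL : 0 < L) :
  (forall x : seq R, inP L x -> exists d, phi x = Some d /\ inRdata L d) /\
  (forall x1 x2 : seq R, inP L x1 -> inP L x2 -> phi x1 = phi x2 -> x1 = x2) /\
  (forall d : data R, inRdata L d -> exists x : seq R, inP L x /\ phi x = Some d).
Proof.
split; first by move=> x /phi_inP [d [? ? _]]; exists d.
split; first by move=> x1 x2 /phi_inP [d1 [-> _ <-]] /phi_inP [d2 [-> _ <-]] [->].
move=> d dR; have [inx algd] := psi_spec dR.
exists (psi d); split; first exact: inPN_inP (Nsup_pos dR) inx.
case/and4P: inx => /eqP sx _ _ _.
by rewrite (phi_algo sx) algd // -addnn leq_addr.
Qed.
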